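(* Let $\lambda\in X^+$ be a $p$-core. Then $$\sum_{(\alpha,l)}\nu_p(lp)\,\chi(s_{\alpha,l}\cdot\lambda)=\sum_{(\alpha,l)\in R(\lambda)}\nu_p(lp)\,\chi(s_{\alpha,l}\cdot\lambda),$$ where the left sum runs over all pairs $(\alpha,l)$ with $\alpha$ a positive root, $l$ an integer $\ge1$ and $\langle\lambda+\rho,\alpha^\vee\rangle-lp>0$, and $\nu_p$ is the $p$-adic valuation. (The left side is the right-hand side of Jantzen's sum formula for $\sum_{i>0}\mathrm{ch}\,\Delta(\lambda)^i$.)
   Context: Setup: $p>2$ is a prime, $m\ge1$, $G=\mathrm{Sp}_{2m}$ over an algebraically closed field of characteristic $p$, with diagonal maximal torus and weight lattice $X=\mathbb Z^m$ (standard basis $\varepsilon_1,\dots,\varepsilon_m$). Positive roots: $\varepsilon_i\pm\varepsilon_j$ ($1\le i<j\le m$) and $2\varepsilon_i$ ($1\le i\le m$). With the standard inner product, $\alpha^\vee=2\alpha/\langle\alpha,\alpha\rangle$, so $(\varepsilon_i\pm\varepsilon_j)^\vee=\varepsilon_i\pm\varepsilon_j$ and $(2\varepsilon_i)^\vee=\varepsilon_i$. $X^+=\{\lambda\in\mathbb Z^m:\lambda_1\ge\dots\ge\lambda_m\ge0\}$, identified with partitions with at most $m$ parts; $l(\lambda)$ is the number of nonzero parts. $\rho=(m,m-1,\dots,1)$. For a root $\alpha$ and $l\in\mathbb Z$, $s_{\alpha,l}(x)=x-(\langle x,\alpha^\vee\rangle-lp)\alpha$ and $w\cdot x=w(x+\rho)-\rho$.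 For $\mu\in X$, $\chi(\mu)\in\mathbb Z[X]$ is the Weyl character; $\chi(\mu)=0$ iff some entry of $\mu+\rho$ is $0$ or two entries of $\mu+\rho$ are equal up to sign, and otherwise $\chi(\mu)=\det(w)\chi(w\cdot\mu)$ for the unique signed permutation $w$ with $w\cdot\mu$ dominant. A $p$-core is $\lambda\in X^+$ such that for all $i\in\{1,\dots,m\}$ and all integers $l\ge1$ with $(\lambda+\rho)_i-lp>0$, the number $(\lambda+\rho)_i-lp$ occurs as an entry of $\lambda+\rho$. $R(\lambda)$ is the set of pairs $(\alpha,l)$ with $\alpha=\varepsilon_i+\varepsilon_j$, $1\le i<j\le l(\lambda)$, $l\ge1$ an integer, $a:=\langle\lambda+\rho,\alpha^\vee\rangle-lp\ge1$, $(\lambda+\rho)_j-a>0$ and $\chi(s_{\alpha,l}\cdot\lambda)\ne0$. *)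

(* Weights of Sp_{2m} are sequences of integers of length m
   (0-based indices: entry k is the coefficient of eps_{k+1}). *)
From mathcomp Require Import all_boot all_order all_algebra.
Set Implicit Arguments. Unset Strict Implicit. Unset Printing Implicit Defensive.
Import Order.TTheory GRing.Theory Num.Theory.
Local Open Scope ring_scope.

Definition weight := seq int.

Definition addw (x y : weight) : weight := [seq a.1 + a.2 | a <- zip x y].
Definition subw (x y : weight) : weight := [seq a.1 - a.2 | a <- zip x y].

Definition rho (m : nat) : weight := [seq ((m - k)%N)%:Z | k <- iota 0 m].

(* positive roots: eps_i - eps_j, eps_i + eps_j (i<j), 2 eps_i  (0-based) *)
Inductive posroot := RMinus of nat & nat | RPlus of nat & nat | RLong of nat.

Definition posroots (m : nat) : seq posroot :=
  [seq RMinus i j | i <- iota 0 m, j <- [seq j <- iota 0 m | (i < j)%N]] ++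
  [seq RPlus i j | i <- iota 0 m, j <- [seq j <- iota 0 m | (i < j)%N]] ++
  [seq RLong i | i <- iota 0 m].

Definition rootv (m : nat) (a : posroot) : weight :=
  match a with
  | RMinus i j => mkseq (fun k => (k == i)%:Z - (k == j)%:Z) m
  | RPlus i j => mkseq (fun k => (k == i)%:Z + (k == j)%:Z) m
  | RLong i => mkseq (fun k => 2 * (k == i)%:Z) m
  end.

(* <x, alpha^vee> *)
Definition pairc (a : posroot) (x : weight) : int :=
  match a with
  | RMinus i j => nth 0 x i - nth 0 x j
  | RPlus i j => nth 0 x i + nth 0 x j
  | RLong i => nth 0 x i
  end.

Definition sref (m p : nat) (a : posroot) (l : nat) (x : weight) : weight :=
  subw x [seq (pairc a x - (l * p)%N%:Z) * c | c <- rootv m a].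

Definition dot (m : nat) (w : weight -> weight) (x : weight) : weight :=
  subw (w (addw x (rho m))) (rho m).

(* ---- Weyl characters ----
   chi(mu) is represented in the Z-basis {chi(lam) : lam dominant} of the
   span of the Weyl characters: a character is its coefficient function on
   dominant weights. *)
Definition character := weight -> int.

Definition chi_vanish (m : nat) (mu : weight) : bool :=
  let v := addw mu (rho m) in (0 \in v) || ~~ uniq (map absz v).

(* the dominant weight w.mu, for the signed permutation w sorting |mu+rho| *)
Definition domrep (m : nat) (mu : weight) : weight :=
  let v := addw mu (rho m) in
  subw (map Posz (sort geq (map absz v))) (rho m).

(* det(w) = sign of the permutation part times the product of the signs *)
Definition detw (m : nat) (mu : weight) : int :=
  let v := addw mu (rho m) in
  (-1) ^+ (count (fun x : int => (x < 0)%R) v +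
           \sum_(i < m) \sum_(j < m)
              ((i < j)%N && (absz (nth 0%R v i) < absz (nth 0%R v j))%N))%N.

Definition chi (m : nat) (mu : weight) : character :=
  fun nu => if chi_vanish m mu then 0
            else if domrep m mu == nu then detw m mu else 0.

Definition dominant (m : nat) (lam : weight) : bool :=
  [&& size lam == m, sorted (fun x y : int => y <= x) lam & all (fun x => 0 <= x) lam].

Definition len (lam : weight) : nat := count (fun x : int => x != 0) lam.

Definition pcore (m p : nat) (lam : weight) : Prop :=
  dominant m lam /\
  forall (i l : nat), (i < m)%N -> (1 <= l)%N ->
    let v := addw lam (rho m) in
    0 < nth 0 v i - (l * p)%N%:Z -> (nth 0 v i - (l * p)%N%:Z) \in v.

(* The range 1 <= l <= |<lam+rho,alpha^vee>| contains all such l. *)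
Definition jsum (m p : nat) (P : posroot -> nat -> bool) (lam : weight) : character :=
  fun nu =>
    \sum_(a <- posroots m)
      \sum_(1 <= l < (absz (pairc a (addw lam (rho m)))).+1
            | (0 < pairc a (addw lam (rho m)) - (l * p)%N%:Z) && P a l)
        (logn p (l * p))%:Z * chi m (dot m (sref m p a l) lam) nu.

Definition inR (m p : nat) (lam : weight) (a : posroot) (l : nat) : bool :=
  match a with
  | RPlus i j =>
      let v := addw lam (rho m) in
      let aa := pairc a v - (l * p)%N%:Z in
      [&& (i < j)%N, (j < len lam)%N, (1 <= l)%N, 1 <= aa,
          0 < nth 0 v j - aa & ~~ chi_vanish m (dot m (sref m p a l) lam)]
  | _ => false
  end.

(* Write v = lambda + rho (an entry-wise strictly decreasing sequence of
   positive integers).  A Weyl character chi(mu) only depends on mu + rho,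
   and s_{alpha,l} . lambda + rho = s_{alpha,l}(v), so every term is read
   off the entries of s_{alpha,l}(v).  The difference of the two sums is
   the sum of the "defect" terms, over the pairs (alpha, l) with
   <v, alpha^vee> > lp that are not in R(lambda); it vanishes because
   - alpha = eps_i - eps_j: by the p-core property v_i - lp = v_k for some
     k, and this is also entry j of s_{alpha,l}(v), so the character is 0;
   - alpha = eps_i + eps_j with v_j + lp <> v_i: either (alpha, l) lies in
     R(lambda), or s_{alpha,l}(v) has a zero entry or two entries equal up
     to sign (using the p-core property, or the shape of the tail of v);
   - alpha = eps_i + eps_j with v_j + lp = v_i: s_{alpha,l}(v) and
     s_{2 eps_i,l}(v) differ only by the sign of entry j, so the two terms
     cancel, and by the p-core property each term of a long root 2 eps_i is
     cancelled by exactly one such pair. *)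
From mathcomp Require Import all_boot all_order all_algebra.
From mathcomp Require Import zify.
From Stdlib Require Import FunctionalExtensionality.
Import Order.TTheory GRing.Theory Num.Theory.
Set Implicit Arguments. Unset Strict Implicit.
Local Open Scope ring_scope.

Local Notation lrho m lam := (addw lam (rho m)).

(* Linear arithmetic treating the entries [nth _ s q] of sequences as atoms. *)
Ltac nth_lia :=
  repeat match goal with H : context [nth _ _ _] |- _ => revert H end;
  cbn [pairc];
  repeat match goal with |- context [@nth ?T ?d ?s ?q] =>
    let x := fresh "x" in set x := @nth T d s q; clearbody x end;
  intros; lia.

Lemma size_addw (x y : weight) : size (addw x y) = minn (size x) (size y).
Proof. by rewrite /addw size_map size_zip. Qed.

Lemma size_subw (x y : weight) : size (subw x y) = minn (size x) (size y).
Proof. by rewrite /subw size_map size_zip. Qed.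

Lemma nth_addw (x y : weight) q : (q < size x)%N -> (q < size y)%N ->
  nth 0 (addw x y) q = nth 0 x q + nth 0 y q.
Proof. by elim: x y q => [|a x IH] [|b y] [|q] //= hx hy; apply: IH. Qed.

Lemma nth_subw (x y : weight) q : (q < size x)%N -> (q < size y)%N ->
  nth 0 (subw x y) q = nth 0 x q - nth 0 y q.
Proof. by elim: x y q => [|a x IH] [|b y] [|q] //= hx hy; apply: IH. Qed.

Lemma subwK (w r : weight) : size w = size r -> addw (subw w r) r = w.
Proof.
elim: w r => [|a w IH] [|b r] //= [hs]; rewrite /addw /subw /=.
by rewrite subrK; congr cons; apply: IH.
Qed.

Lemma size_rho m : size (rho m) = m.
Proof. by rewrite /rho size_map size_iota. Qed.

Lemma nth_rho m q : (q < m)%N -> nth 0 (rho m) q = (m - q)%:Z.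
Proof. by move=> hq; rewrite /rho (nth_map 0%N) ?size_iota // nth_iota. Qed.

Lemma size_rootv m a : size (rootv m a) = m.
Proof. by case: a => *; rewrite size_mkseq. Qed.

Lemma size_sref m p a l (x : weight) : size x = m -> size (sref m p a l x) = m.
Proof. by move=> hx; rewrite /sref size_subw size_map size_rootv hx minnn. Qed.

Lemma nth_sref m p a l (x : weight) q : size x = m -> (q < m)%N ->
  nth 0 (sref m p a l x) q =
  nth 0 x q - (pairc a x - (l * p)%N%:Z) * nth 0 (rootv m a) q.
Proof.
move=> hx hq; rewrite /sref nth_subw ?hx ?size_map ?size_rootv //.
by rewrite (nth_map 0) ?size_rootv.
Qed.

Lemma nth_sref_minus m p i j l (x : weight) q : size x = m ->
  (i < m)%N -> (j < m)%N -> i != j -> (q < m)%N ->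
  nth 0 (sref m p (RMinus i j) l x) q =
  if q == i then nth 0 x j + (l * p)%N%:Z
  else if q == j then nth 0 x i - (l * p)%N%:Z
  else nth 0 x q.
Proof.
move=> hx hi hj ne hq; rewrite nth_sref // /= nth_mkseq //.
have [->|nqi] := eqVneq q i; first by rewrite (negbTE ne) /=; lia.
by have [->|nqj] := eqVneq q j => /=; lia.
Qed.

Lemma nth_sref_plus m p i j l (x : weight) q : size x = m ->
  (i < m)%N -> (j < m)%N -> i != j -> (q < m)%N ->
  nth 0 (sref m p (RPlus i j) l x) q =
  if q == i then (l * p)%N%:Z - nth 0 x j
  else if q == j then (l * p)%N%:Z - nth 0 x i
  else nth 0 x q.
Proof.
move=> hx hi hj ne hq; rewrite nth_sref // /= nth_mkseq //.
have [->|nqi] := eqVneq q i; first by rewrite (negbTE ne) /=; lia.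
by have [->|nqj] := eqVneq q j => /=; lia.
Qed.

Lemma nth_sref_long m p i l (x : weight) q : size x = m ->
  (i < m)%N -> (q < m)%N ->
  nth 0 (sref m p (RLong i) l x) q =
  if q == i then 2 * (l * p)%N%:Z - nth 0 x i else nth 0 x q.
Proof.
move=> hx hi hq; rewrite nth_sref // /= nth_mkseq //.
by have [->|nqi] := eqVneq q i => /=; lia.
Qed.

(* Weyl characters as functions of mu + rho: [chiv m w] is chi(w - rho). *)

Definition vanv (w : weight) : bool := (0 \in w) || ~~ uniq (map absz w).

Definition detv (m : nat) (w : weight) : int :=
  (-1) ^+ (count (fun x : int => (x < 0)%R) w +
           \sum_(i < m) \sum_(j < m)
              ((i < j)%N && (absz (nth 0%R w i) < absz (nth 0%R w j))%N))%N.

Definition chiv (m : nat) (w : weight) : character :=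
  fun nu => if vanv w then 0
            else if subw (map Posz (sort geq (map absz w))) (rho m) == nu
                 then detv m w else 0.

Lemma chiE m mu nu : chi m mu nu = chiv m (lrho m mu) nu.
Proof. by []. Qed.

Lemma vanv_rep (w : weight) q1 q2 : (q1 < size w)%N -> (q2 < size w)%N ->
  q1 != q2 -> absz (nth 0 w q1) = absz (nth 0 w q2) -> vanv w.
Proof.
move=> h1 h2 ne e; apply/orP; right; apply/negP => U.
move: (nth_uniq 0%N (s := map absz w) (i := q1) (j := q2)).
by rewrite !size_map !(nth_map 0) // e eqxx (negbTE ne) => /(_ h1 h2 U).
Qed.

Lemma vanv_zero (w : weight) q : (q < size w)%N -> nth 0 w q = 0 -> vanv w.
Proof. by move=> h e; apply/orP; left; rewrite -e mem_nth. Qed.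

Lemma mem0_absz (s : seq int) : (0 \in s) = (0%N \in map absz s).
Proof.
elim: s => [|x s IH] //=; rewrite !in_cons IH; congr orb.
by rewrite [in RHS]eq_sym absz_eq0 eq_sym.
Qed.

Lemma count_neg_flip (s t : seq int) k : size s = size t -> (k < size s)%N ->
  (forall q, q != k -> nth 0 s q = nth 0 t q) -> nth 0 s k < 0 ->
  0 <= nth 0 t k ->
  count (fun x : int => x < 0) s = (count (fun x : int => x < 0) t).+1.
Proof.
elim: s t k => [|x s IH] [|y t] [|k] //= [hs] hk heq hn hp.
- have -> : s = t by apply: (@eq_from_nth _ 0) => // q _; apply: (heq q.+1).
  by rewrite hn ltNge hp.
- have -> : x = y by apply: (heq 0%N).
  by rewrite (IH t k) // ?addnS // => q ne; apply: (heq q.+1).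
Qed.

(* Changing the sign of one positive entry negates the character
   (a sign change is a Weyl group element of determinant -1). *)
Lemma chiv_sign_flip m (w w' : weight) k nu : size w = m -> size w' = m ->
  (k < m)%N -> nth 0 w k = - nth 0 w' k -> 0 < nth 0 w' k ->
  (forall q, q != k -> nth 0 w q = nth 0 w' q) ->
  chiv m w nu = - chiv m w' nu.
Proof.
move=> s1 s2 hk ek pk eq.
have ea q : absz (nth 0 w q) = absz (nth 0 w' q).
  by case: (eqVneq q k) => [->|ne]; rewrite ?ek ?abszN ?eq.
have em : map absz w = map absz w'.
  apply: (@eq_from_nth _ 0%N); rewrite ?size_map ?s1 ?s2 // => q hq.
  by rewrite !(nth_map 0) ?s1 ?s2 // -s1.
rewrite /chiv /vanv !mem0_absz em.
case: ifP => _; first by rewrite oppr0.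
case: ifP => _; last by rewrite oppr0.
rewrite /detv (@count_neg_flip w w' k) ?s1 ?s2 // ?ek ?oppr_lt0 ?ltW //.
rewrite addSn exprS mulN1r; congr (- (_ ^+ (_ + _))).
by apply: eq_bigr => i _; apply: eq_bigr => j _; rewrite !ea.
Qed.

Section Dominant.
Variables (m : nat) (lam : weight).
Hypothesis dom : dominant m lam.

Lemma dom_size : size lam = m.
Proof. by case/and3P: dom => /eqP. Qed.

Lemma dom_nonneg q : 0 <= nth 0 lam q.
Proof.
case/and3P: dom => _ _ /allP hpos; case: (ltnP q (size lam)) => hq.
  by apply: hpos; rewrite mem_nth.
by rewrite nth_default.
Qed.

Lemma dom_nonincr q r : (q <= r)%N -> (r < m)%N -> nth 0 lam r <= nth 0 lam q.
Proof.
case/and3P: dom => /eqP sz so _ hqr hr.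
have tr : transitive (fun x y : int => y <= x).
  by move=> a b c h1 h2; apply: le_trans h2 h1.
apply: (sorted_leq_nth tr (fun x => lexx x) 0 so) => //; rewrite inE sz //; lia.
Qed.

Lemma size_lrho : size (lrho m lam) = m.
Proof. by rewrite size_addw size_rho dom_size minnn. Qed.

Lemma nth_lrho q : (q < m)%N -> nth 0 (lrho m lam) q = nth 0 lam q + (m - q)%:Z.
Proof. by move=> hq; rewrite nth_addw ?nth_rho ?size_rho ?dom_size. Qed.

Lemma lrho_pos q : (q < m)%N -> 0 < nth 0 (lrho m lam) q.
Proof. by move=> hq; rewrite nth_lrho //; have := dom_nonneg q; lia. Qed.

Lemma lrho_decr q r : (q < r)%N -> (r < m)%N ->
  nth 0 (lrho m lam) r < nth 0 (lrho m lam) q.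
Proof.
move=> hqr hr; rewrite !nth_lrho //; last lia.
by have := dom_nonincr (ltnW hqr) hr; lia.
Qed.

Lemma lrho_inj q r : (q < m)%N -> (r < m)%N ->
  nth 0 (lrho m lam) q = nth 0 (lrho m lam) r -> q = r.
Proof.
move=> hq hr e; case: (ltngtP q r) => // h.
  by have := lrho_decr h hr; rewrite e ltxx.
by have := lrho_decr h hq; rewrite e ltxx.
Qed.

Lemma lrho_lt_index q r : (q < m)%N -> (r < m)%N ->
  nth 0 (lrho m lam) r < nth 0 (lrho m lam) q -> (q < r)%N.
Proof.
move=> hq hr e; case: (ltngtP q r) => // h.
  by have := lrho_decr h hq; rewrite ltNge (ltW e).
by move: e; rewrite h ltxx.
Qed.

Lemma dom_len_zero j : (j < m)%N -> ~~ (j < len lam)%N -> nth 0 lam j = 0.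
Proof.
move=> hj hl; apply/eqP; apply/negPn/negP => nz; move/negP: hl; apply.
rewrite /len -(cat_take_drop j.+1 lam) count_cat.
have : all (fun x : int => x != 0) (take j.+1 lam).
  apply/(all_nthP 0) => r; rewrite size_take dom_size => hr.
  have hrj : (r <= j)%N by move: hr; case: ifP; lia.
  rewrite nth_take; last lia.
  by have := dom_nonincr hrj hj; have := dom_nonneg j; move: nz; lia.
rewrite all_count size_take dom_size; case: ifP => [hjm|]; last lia.
by move/eqP => ->; lia.
Qed.

Lemma lrho_tail j q : (j < m)%N -> ~~ (j < len lam)%N -> (j <= q)%N ->
  (q < m)%N -> nth 0 (lrho m lam) q = (m - q)%:Z.
Proof.
move=> hj hl hjq hq; rewrite nth_lrho //.
have := dom_len_zero hj hl; have := dom_nonincr hjq hq.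
by have := dom_nonneg q; lia.
Qed.

End Dominant.

Lemma pcore_shift m p lam i l : pcore m p lam -> (i < m)%N -> (1 <= l)%N ->
  0 < nth 0 (lrho m lam) i - (l * p)%N%:Z ->
  exists k, (k < m)%N /\
    nth 0 (lrho m lam) k = nth 0 (lrho m lam) i - (l * p)%N%:Z.
Proof.
case=> d pc hi hl hpos; have /= hmem := pc i l hi hl hpos.
exists (index (nth 0 (lrho m lam) i - (l * p)%N%:Z) (lrho m lam)).
by rewrite nth_index // -[X in (_ < X)%N](size_lrho d) index_mem.
Qed.

Definition jterm m p lam (nu : weight) a l : int :=
  (logn p (l * p))%:Z * chi m (dot m (sref m p a l) lam) nu.

Definition defect m p lam (nu : weight) a l : int :=
  if (0 < pairc a (lrho m lam) - (l * p)%N%:Z) && ~~ inR m p lam a l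
  then jterm m p lam nu a l else 0.

Lemma dot_lrho m p lam a l : dominant m lam ->
  lrho m (dot m (sref m p a l) lam) = sref m p a l (lrho m lam).
Proof. by move=> d; rewrite /dot subwK // size_sref ?size_rho // size_lrho. Qed.

Lemma jterm_vanish m p lam nu a l : dominant m lam ->
  vanv (sref m p a l (lrho m lam)) -> jterm m p lam nu a l = 0.
Proof. by move=> d h; rewrite /jterm chiE dot_lrho // /chiv h mulr0. Qed.

Section Defects.
Variables (m p : nat) (lam nu : weight).
Hypotheses (p_pos : (0 < p)%N) (core : pcore m p lam).
Let dom : dominant m lam := core.1.

Lemma defect_minus i j l : (i < j)%N -> (j < m)%N -> (1 <= l)%N ->
  defect m p lam nu (RMinus i j) l = 0.
Proof.
move=> hij hj hl; have hi : (i < m)%N by lia.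
rewrite /defect; case: ifP => // /andP[/= hpos _]; apply: jterm_vanish => //.
have vj := lrho_pos dom hj.
have [k [hk ek]] : exists k, (k < m)%N /\
    nth 0 (lrho m lam) k = nth 0 (lrho m lam) i - (l * p)%N%:Z.
  by apply: pcore_shift => //; nth_lia.
have nkj : k != j by apply/eqP => e; move: ek; rewrite e; nth_lia.
have nki : k != i by apply/eqP => e; move: ek; rewrite e; nth_lia.
have nij : i != j by rewrite neq_ltn hij.
apply: (@vanv_rep _ j k); rewrite ?size_sref ?size_lrho // 1?eq_sym //.
by rewrite !nth_sref_minus ?size_lrho // (negbTE nki) (negbTE nkj) eqxx
  eq_sym (negbTE nij) ek.
Qed.

(* For alpha = eps_i + eps_j and lp > v_i, a pair outside R(lambda) has
   j >= l(lambda); then entry j of s_{alpha,l}(v) is lp - v_i = v_k = m - k. *)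
Lemma plus_tail_vanish i j l : (i < j)%N -> (j < m)%N ->
  ~~ (j < len lam)%N -> nth 0 (lrho m lam) i < (l * p)%N%:Z ->
  0 < pairc (RPlus i j) (lrho m lam) - (l * p)%N%:Z ->
  vanv (sref m p (RPlus i j) l (lrho m lam)).
Proof.
move=> hij hj hlen hlt hpos; have hi : (i < m)%N by lia.
have nij : i != j by rewrite neq_ltn hij.
have nji : j != i by rewrite eq_sym.
have tail := lrho_tail dom hj hlen.
have tj := tail j (leqnn j) hj.
pose x := absz ((l * p)%N%:Z - nth (0 : int) (lrho m lam) i).
have hx : x%:Z = (l * p)%N%:Z - nth 0 (lrho m lam) i by rewrite /x; nth_lia.
have hxj : (x < m - j)%N by move: hpos; nth_lia.
have hx0 : (0 < x)%N by nth_lia.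
pose k := (m - x)%N.
have hk : (k < m)%N by rewrite /k; lia.
have hjk : (j < k)%N by rewrite /k; lia.
have nki : k != i by rewrite neq_ltn (ltn_trans hij hjk) orbT.
have nkj : k != j by rewrite neq_ltn hjk orbT.
apply: (@vanv_rep _ j k); rewrite ?size_sref ?size_lrho // 1?eq_sym //.
rewrite !nth_sref_plus ?size_lrho // (negbTE nki) (negbTE nkj).
by rewrite eqxx (negbTE nji) (tail k (ltnW hjk) hk) -hx /k; congr absz; lia.
Qed.

Lemma defect_plus i j l : (i < j)%N -> (j < m)%N -> (1 <= l)%N ->
  nth 0 (lrho m lam) j + (l * p)%N%:Z != nth 0 (lrho m lam) i ->
  defect m p lam nu (RPlus i j) l = 0.
Proof.
move=> hij hj hl hne; have hi : (i < m)%N by lia.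
have nij : i != j by rewrite neq_ltn hij.
have nji : j != i by rewrite eq_sym.
rewrite /defect; case: ifP => // /andP[hpos notR]; apply: jterm_vanish => //.
have vi := lrho_pos dom hi; have vj := lrho_pos dom hj.
have [hlt|hge] := boolP (nth 0 (lrho m lam) i < (l * p)%N%:Z).
  case hlen: (j < len lam)%N; last exact: plus_tail_vanish (negbT hlen) hlt hpos.
  apply/negPn/negP => nv; move/negP: notR; apply.
  apply/andP; split => //; apply/and5P; split => //; try nth_lia.
  by rewrite /chi_vanish dot_lrho.
have [heq|hgt] := boolP (nth 0 (lrho m lam) i == (l * p)%N%:Z).
  apply: (@vanv_zero _ j); rewrite ?size_sref ?size_lrho //.
  by rewrite nth_sref_plus ?size_lrho // (negbTE nji) eqxx; nth_lia.
have [k [hk ek]] : exists k, (k < m)%N /\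
    nth 0 (lrho m lam) k = nth 0 (lrho m lam) i - (l * p)%N%:Z.
  by apply: pcore_shift => //; nth_lia.
have nkj : k != j by apply/eqP => e; move: ek hne; rewrite e; nth_lia.
have nki : k != i by apply/eqP => e; move: ek; rewrite e; nth_lia.
apply: (@vanv_rep _ j k); rewrite ?size_sref ?size_lrho // 1?eq_sym //.
rewrite !nth_sref_plus ?size_lrho // (negbTE nki) (negbTE nkj).
by rewrite eqxx (negbTE nji) ek; nth_lia.
Qed.

(* If v_j + lp = v_i, the term of eps_i + eps_j is the negative of the term
   of 2 eps_i: the two reflected weights differ by the sign of entry j. *)
Lemma defect_plus_long i j l : (i < j)%N -> (j < m)%N -> (1 <= l)%N ->
  nth 0 (lrho m lam) j + (l * p)%N%:Z = nth 0 (lrho m lam) i ->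
  defect m p lam nu (RPlus i j) l = - jterm m p lam nu (RLong i) l.
Proof.
move=> hij hj hl he; have hi : (i < m)%N by lia.
have nij : i != j by rewrite neq_ltn hij.
have nji : j != i by rewrite eq_sym.
have vj := lrho_pos dom hj.
rewrite /defect; case: ifP => [_|]; last first.
  move/negbT; rewrite negb_and negbK => /orP[h|]; first by exfalso; move: h; nth_lia.
  by case/andP => _ /and5P[_ _ _ h _]; exfalso; move: h; nth_lia.
rewrite /jterm !chiE !dot_lrho // -mulrN; congr (_ * _).
apply: (@chiv_sign_flip _ _ _ j); rewrite ?size_sref ?size_lrho //.
- by rewrite nth_sref_plus ?nth_sref_long ?size_lrho //
    (negbTE nji) eqxx; nth_lia.
- by rewrite nth_sref_long ?size_lrho // (negbTE nji).
move=> q nqj; case: (ltnP q m) => hq; last first.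
  by rewrite !nth_default ?size_sref ?size_lrho.
rewrite nth_sref_plus ?nth_sref_long ?size_lrho // (negbTE nqj).
by case: (q == i) => //; nth_lia.
Qed.

(* For fixed i and l the long-root term is cancelled by the unique
   eps_i + eps_k with v_k = v_i - lp given by the p-core property. *)
Lemma long_plus_cancel i l : (i < m)%N -> (1 <= l)%N ->
  \sum_(j <- [seq j <- iota 0 m | (i < j)%N]) defect m p lam nu (RPlus i j) l
  + defect m p lam nu (RLong i) l = 0.
Proof.
move=> hi hl.
have -> : defect m p lam nu (RLong i) l =
    if 0 < nth 0 (lrho m lam) i - (l * p)%N%:Z
    then jterm m p lam nu (RLong i) l else 0 by rewrite /defect /inR andbT.
case: ifPn => hc; last first.
  rewrite addr0 big1_seq // => j; rewrite mem_filter mem_iota.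
  case/andP=> _ /andP[hij /andP[_ hj]].
  have vj := lrho_pos dom hj.
  by apply: defect_plus => //; apply/negP => /eqP e; move: hc; nth_lia.
have [k [hk ek]] := pcore_shift core hi hl hc.
have hik : (i < k)%N by apply: (lrho_lt_index dom) => //; nth_lia.
rewrite (bigD1_seq k) /=; first last.
- exact/filter_uniq/iota_uniq.
- by rewrite mem_filter mem_iota hik.
rewrite big1_seq ?addr0; first by rewrite defect_plus_long ?addNr //; nth_lia.
move=> j /andP[njk]; rewrite mem_filter mem_iota => /andP[hij /andP[_ hj]].
apply: defect_plus => //; apply/negP => /eqP e; move/negP: njk; apply.
by apply/eqP; apply: (lrho_inj dom hj hk); nth_lia.
Qed.

Lemma plus_range_trunc i j : (i < j)%N -> (j < m)%N ->
  \sum_(1 <= l < (absz (pairc (RPlus i j) (lrho m lam))).+1)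
     defect m p lam nu (RPlus i j) l =
  \sum_(1 <= l < (absz (nth 0 (lrho m lam) i)).+1)
     defect m p lam nu (RPlus i j) l.
Proof.
move=> hij hj; have vi := lrho_pos dom (ltn_trans hij hj).
have vj := lrho_pos dom hj.
rewrite (@big_cat_nat _ _ _ (absz (nth 0 (lrho m lam) i)).+1) //=; last nth_lia.
rewrite [X in _ + X]big1_seq ?addr0 // => l /andP[_].
rewrite mem_index_iota => /andP[hl _].
apply: defect_plus => //; first lia.
have lp : (l <= l * p)%N by rewrite leq_pmulr.
by apply/negP => /eqP; nth_lia.
Qed.

Lemma sum_defect : \sum_(a <- posroots m)
  \sum_(1 <= l < (absz (pairc a (lrho m lam))).+1) defect m p lam nu a l = 0.
Proof.
rewrite /posroots !big_cat !big_allpairs_dep big_map /=.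
rewrite [X in X + _]big1_seq ?add0r; last first.
  move=> i /andP[_]; rewrite mem_iota => /andP[_ hi].
  apply: big1_seq => j /andP[_]; rewrite mem_filter mem_iota.
  case/andP=> hij /andP[_ hj]; apply: big1_seq => l /andP[_].
  by rewrite mem_index_iota => /andP[hl _]; apply: defect_minus.
rewrite -big_split; apply: big1_seq => i /andP[_]; rewrite mem_iota => /andP[_ hi].
have trunc : {in [seq j <- iota 0 m | (i < j)%N], forall j,
    \sum_(1 <= l < (absz (pairc (RPlus i j) (lrho m lam))).+1)
       defect m p lam nu (RPlus i j) l =
    \sum_(1 <= l < (absz (nth 0 (lrho m lam) i)).+1)
       defect m p lam nu (RPlus i j) l}.
  move=> j; rewrite mem_filter mem_iota => /andP[hij /andP[_ hj]].
  exact: plus_range_trunc.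
rewrite (eq_big_seq _ trunc) exchange_big -big_split /=; apply: big1_seq => l /andP[_].
by rewrite mem_index_iota => /andP[hl _]; apply: long_plus_cancel.
Qed.

End Defects.

Lemma sum_filter_diff (r : seq nat) (P Q : pred nat) (F : nat -> int) :
  \sum_(l <- r | P l && true) F l - \sum_(l <- r | P l && Q l) F l =
  \sum_(l <- r) (if P l && ~~ Q l then F l else 0).
Proof.
rewrite !(big_mkcond (fun l => P l && _)) -sumrB; apply: eq_bigr => l _.
by case: (P l); case: (Q l); rewrite /= ?subrr ?subr0.
Qed.

Theorem mainTheorem2 (p m : nat) (lam : weight) :
  prime p -> (2 < p)%N -> (1 <= m)%N -> pcore m p lam ->
  jsum m p (fun _ _ => true) lam = jsum m p (inR m p lam) lam.
Proof.
move=> _ p_gt2 _ core; have p_pos : (0 < p)%N by lia.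
apply: functional_extensionality => nu; apply/eqP; rewrite -subr_eq0 /jsum -sumrB.
apply/eqP; apply: etrans (sum_defect nu p_pos core).
by apply: eq_bigr => a _; apply: sum_filter_diff.
Qed.
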